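(* Let $\mathcal{X}$ be an input space with a probability distribution $p$, $\mathcal{Y}$ a finite label set, $\ell$ the 0-1 loss $\ell(y,y')=\mathbb{I}[y\neq y']$, and $L(F,F')=\mathbb{E}_{x\sim p}[\ell(F(x),F'(x))]$ for $F,F':\mathcal{X}\to\mathcal{Y}$. Let $\mathcal{B}$ be the set of all (measurable) functions $\mathcal{X}\to\mathcal{Y}$, $\mathcal{B}_+\subseteq\mathcal{B}$ the acceptable black boxes, $\mathcal{E}\subseteq\mathcal{B}$ the class of explanations and $\mathcal{E}_+\subseteq\mathcal{E}$ the acceptable explanations, and let $\epsilon_+\ge0$. Let $B\in\mathcal{B}$ with $\hat{\mathcal{O}}^*(B)=0$, i.e. $B\notin\mathcal{B}_+$. Let $E\in\mathcal{E}$ minimize $L(\cdot,B)$ over $\mathcal{E}$; let $B_+\in\mathcal{B}_+$ minimize $L(\cdot,B)$ over $\mathcal{B}_+$; let $E'\in\mathcal{E}$ minimize $L(\cdot,B_+)$ over $\mathcal{E}$; and let $E_+\in\mathcal{E}_+$ minimize $L(\cdot,B_+)$ over $\mathcal{E}_+$ (all these minimizers are assumed to exist). Define the restriction error $\epsilon_R=L(B_+,B)$ and the acceptable relative error $\epsilon_A=L(E_+,B_+)-L(E',B_+)\ge0$. If $L(E,B)+2\epsilon_R+\epsilon_A\le\epsilon_+$, then $E_+$ is potentially misleading for $B$, i.e. $\hat{\mathcal{O}}(E_+)\neq\hat{\mathcal{O}}^*(B)$.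
   Context: Acceptable black boxes/explanations are those in which all desired features appear and no prohibited features appear; here they are treated as given subsets $\mathcal{B}_+\subseteq\mathcal{B}$ and $\mathcal{E}_+\subseteq\mathcal{E}$. For a black box $B$ and fidelity threshold $\epsilon_+\ge0$, define $\hat{\mathcal{O}}(E)=\mathbb{I}[E\in\mathcal{E}_+\wedge L(E,B)\le\epsilon_+]$ (estimated user trust of $B$ given explanation $E$) and $\hat{\mathcal{O}}^*(B)=\mathbb{I}[B\in\mathcal{B}_+]$. An explanation $E$ of $B$ is potentially misleading if $\hat{\mathcal{O}}(E)\neq\hat{\mathcal{O}}^*(B)$. *)

From HB Require Import structures.
From mathcomp Require Import all_boot all_order all_algebra.
From mathcomp Require Import all_classical all_reals all_analysis.
Set Implicit Arguments. Unset Strict Implicit. Unset Printing Implicit Defensive.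
Import Order.TTheory GRing.Theory Num.Theory.
Local Open Scope classical_set_scope.
Local Open Scope ring_scope.

Definition loss01 (Y : eqType) (y y' : Y) : bool := y != y'.

(* A function X -> Y with Y finite is measurable iff all its fibres are measurable
   (Y carries the discrete sigma-algebra). *)
Definition meas_fun (d : measure_display) (X : measurableType d) (Y : finType)
  (F : X -> Y) : Prop := forall y : Y, measurable (F @^-1` [set y]).

Definition Bcal (d : measure_display) (X : measurableType d) (Y : finType)
  : set (X -> Y) := [set F | meas_fun F].

Definition Lerr (d : measure_display) (X : measurableType d) (R : realType)
  (P : probability X R) (Y : finType) (F F' : X -> Y) : \bar R :=
  (\int[P]_x ((loss01 (F x) (F' x))%:R : R)%:E)%E.

Definition Ohat (d : measure_display) (X : measurableType d) (R : realType)
  (P : probability X R) (Y : finType) (Eplus : set (X -> Y)) (epsp : R)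
  (B E : X -> Y) : bool :=
  `[< Eplus E >] && (Lerr P E B <= epsp%:E)%E.

Definition Ostar (X : Type) (Y : finType) (Bplus : set (X -> Y)) (B : X -> Y) : bool :=
  `[< Bplus B >].

Definition potentially_misleading (d : measure_display) (X : measurableType d)
  (R : realType) (P : probability X R) (Y : finType)
  (Bplus Eplus : set (X -> Y)) (epsp : R) (B E : X -> Y) : Prop :=
  Ohat P Eplus epsp B E != Ostar Bplus B.

Definition minimizer (d : measure_display) (X : measurableType d) (R : realType)
  (P : probability X R) (Y : finType) (S : set (X -> Y)) (T F : X -> Y) : Prop :=
  S F /\ forall G, S G -> (Lerr P F T <= Lerr P G T)%E.
Arguments Bcal {d} X Y.

From HB Require Import structures.
From mathcomp Require Import all_boot all_order all_algebra.
From mathcomp Require Import all_classical all_reals all_analysis.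
Import Order.TTheory GRing.Theory Num.Theory.
Local Open Scope classical_set_scope.
Local Open Scope ring_scope.

(** The 0-1 risk [L F G] is the probability of the event where [F] and [G]
    disagree, hence a finite pseudometric on measurable classifiers.  Since
    [B] is not acceptable, [E+] is misleading as soon as it is trusted, i.e.
    as soon as [L(E+, B) <= eps+].  Two triangle inequalities through [B+]
    and the optimality of [E'] give
    [L(E+, B) <= L(E+, B+) + eps_R = L(E', B+) + eps_A + eps_R
              <= L(E, B+) + eps_A + eps_R <= L(E, B) + 2 eps_R + eps_A]. *)

Section ZeroOneRisk.
Set Implicit Arguments. Unset Strict Implicit.
Context (d : measure_display) (X : measurableType d) (R : realType)
  (P : probability X R) (Y : finType).

Definition disagreement (F G : X -> Y) : set X := [set x | F x != G x].

Lemma measurable_disagreement (F G : X -> Y) :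
  meas_fun F -> meas_fun G -> measurable (disagreement F G).
Proof.
move=> mF mG.
have -> : disagreement F G =
    \big[setU/set0]_(y <- enum Y) (F @^-1` [set y] `&` ~` (G @^-1` [set y])).
  rewrite -bigcup_seq; apply/seteqP; split => x /=.
  - move=> FGx; exists (F x); first by rewrite /= mem_enum.
    by split => //=; apply/eqP; rewrite eq_sym.
  - by move=> [y _ [/= <- /eqP]]; rewrite eq_sym.
by apply: bigsetU_measurable => y _; apply: measurableI => //; apply: measurableC.
Qed.

Lemma Lerr_disagreement (F G : X -> Y) :
  meas_fun F -> meas_fun G -> Lerr P F G = P (disagreement F G).
Proof.
move=> mF mG; rewrite /Lerr.
have -> : (fun x => ((loss01 (F x) (G x))%:R : R)%:E) =
          (fun x => (\1_(disagreement F G) x)%:E).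
  by apply: funext => x; rewrite indicE /loss01 /disagreement mem_setE.
by rewrite integral_indic ?setIT //; apply: measurable_disagreement.
Qed.

Lemma Lerr_fin_num (F G : X -> Y) :
  meas_fun F -> meas_fun G -> Lerr P F G \is a fin_num.
Proof.
move=> mF mG; rewrite Lerr_disagreement //.
by apply: fin_num_measure; apply: measurable_disagreement.
Qed.

Lemma LerrC (F G : X -> Y) : Lerr P F G = Lerr P G F.
Proof.
by rewrite /Lerr /loss01; congr (integral _ _ _); apply: funext => x; rewrite eq_sym.
Qed.

Lemma Lerr_triangle (F G H : X -> Y) : meas_fun F -> meas_fun G -> meas_fun H ->
  (Lerr P F H <= Lerr P F G + Lerr P G H)%E.
Proof.
move=> mF mG mH; rewrite !Lerr_disagreement //.
have mFG := measurable_disagreement mF mG.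
have mGH := measurable_disagreement mG mH.
apply: le_trans (measureU2 P mFG mGH).
apply: le_measure; rewrite ?inE; [exact: measurable_disagreement | exact: measurableU |].
move=> x FHx; case: (eqVneq (F x) (G x)) => [FGx|]; last by left.
by right; rewrite /disagreement /= -FGx.
Qed.

Lemma Lerr_restricted_explanation (B Bp E E' Ep : X -> Y) :
  meas_fun B -> meas_fun Bp -> meas_fun E -> meas_fun E' -> meas_fun Ep ->
  (Lerr P E' Bp <= Lerr P E Bp)%E ->
  (Lerr P Ep B <=
     Lerr P E B + Lerr P Bp B *+ 2 + (Lerr P Ep Bp - Lerr P E' Bp))%E.
Proof.
move=> mB mBp mE mE' mEp E'_opt.
apply: le_trans (Lerr_triangle mEp mBp mB) _.
set epsA := (Lerr P Ep Bp - Lerr P E' Bp)%E.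
have -> : Lerr P Ep Bp = (epsA + Lerr P E' Bp)%E.
  by rewrite subeK // Lerr_fin_num.
have E_Bp : (Lerr P E Bp <= Lerr P E B + Lerr P Bp B)%E.
  by rewrite [Lerr P Bp B]LerrC; exact: Lerr_triangle.
apply: le_trans (leeD2r _ (leeD2l _ (le_trans E'_opt E_Bp))) _.
by rewrite mule2n [X in (_ <= X)%E]addeC !addeA.
Qed.

End ZeroOneRisk.

Theorem theorem2 (d : measure_display) (X : measurableType d) (R : realType)
  (P : probability X R) (Y : finType)
  (Bplus Ecal Eplus : set (X -> Y)) (epsp : R)
  (B E Bp E' Ep : X -> Y) :
  Bplus `<=` Bcal X Y -> Ecal `<=` Bcal X Y -> Eplus `<=` Ecal ->
  0 <= epsp ->
  Bcal X Y B ->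
  Ostar Bplus B = false ->
  minimizer P Ecal B E ->
  minimizer P Bplus B Bp ->
  minimizer P Ecal Bp E' ->
  minimizer P Eplus Bp Ep ->
  let epsR := Lerr P Bp B in
  let epsA := (Lerr P Ep Bp - Lerr P E' Bp)%E in
  (Lerr P E B + epsR *+ 2 + epsA <= epsp%:E)%E ->
  potentially_misleading P Bplus Eplus epsp B Ep.
Proof.
move=> sBp sE sEp _ mB notB [EE _] [BpB _] [E'E E'_opt] [EpE _] epsR epsA.
rewrite {}/epsR {}/epsA => bound.
rewrite /potentially_misleading notB /Ohat eqbF_neg negbK.
apply/andP; split; first exact/asboolP.
apply: le_trans bound.
exact: Lerr_restricted_explanation mB (sBp _ BpB) (sE _ EE) (sE _ E'E)
  (sE _ (sEp _ EpE)) (E'_opt _ EE).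
Qed.
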